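(* There is an absolute constant $C>0$ such that for every integer $N\ge2$, every Hilbert space $\mathcal{H}$ of dimension $N$ with orthonormal basis $e_0,\dots,e_{N-1}$, every $K\in\mathcal{D}(\mathbb{T})$ and every $e\in\mathcal{H}$, \[ \sum_{I\in\mathcal{D}(K)}|\langle\omega_I,e\rangle_{\mathcal{H}}|^2\,|I|\le C|K|\,\|e\|_{\mathcal{H}}^2 , \] where the vectors $\omega_I$ are defined as follows.
   Context: $\mathbb{T}$ is identified with $[0,1)$ via $x\mapsto e^{2\pi ix}$; $\mathcal{D}(\mathbb{T})$ is the set of dyadic intervals $[2^{-j}k,2^{-j}(k+1))\subset[0,1)$, $j\ge0$, and $\mathcal{D}(K)$ the dyadic subintervals of $K$. For such $I$, $|I|$ is its length, $C_I$ its center, and $\mathrm{rk}(I)=-\log_2|I|$. Let $a_m=\frac{1}{m(\log N)^{1/2}}$ for $1\le m\le N$. For $I\in\mathcal{D}(\mathbb{T})$ with $\mathrm{rk}(I)=j\in[1,N]$, set $\omega_I=\sum_{l=0}^{j-1}a_{j-l}\,e^{2\pi i2^lC_I}e_l$; for other ranks $\omega_I=0$. *)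

From Stdlib Require Import Reals.
From Coquelicot Require Import Coquelicot.
Open Scope R_scope.

Fixpoint rsum (a n : nat) (f : nat -> R) : R :=
  match n with O => 0 | S n' => rsum a n' f + f (a + n')%nat end.

Fixpoint csum (n : nat) (f : nat -> C) : C :=
  match n with O => RtoC 0 | S n' => Cplus (csum n' f) (f n') end.

Definition expi (x : R) : C := (cos (2 * PI * x), sin (2 * PI * x)).

(* The Hilbert space H of dimension N with orthonormal basis e_0..e_{N-1}
   is represented in coordinates: a vector is v : nat -> C, of which only the
   coordinates v 0, ..., v (N-1) matter. *)
Definition inner (N : nat) (v w : nat -> C) : C :=
  csum N (fun l => Cmult (v l) (Cconj (w l))).
Definition norm2 (N : nat) (v : nat -> C) : R :=
  rsum 0 N (fun l => (Cmod (v l))^2).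

Definition a_coef (N m : nat) : R := / (INR m * sqrt (ln (INR N))).

(* Dyadic interval I = [2^-j k, 2^-j (k+1)), k < 2^j: rank j, length 2^-j,
   center C_I = 2^-j (k + 1/2). *)
Definition dlen (j : nat) : R := / 2 ^ j.
Definition dcenter (j k : nat) : R := (INR k + / 2) / 2 ^ j.

Definition omega (N j k : nat) : nat -> C := fun l =>
  if ((1 <=? j) && (j <=? N) && (l <? j))%bool
  then Cmult (RtoC (a_coef N (j - l))) (expi (2 ^ l * dcenter j k))
  else RtoC 0.

(* sum over I in D(K) with rank(I) < rank(K) + M, where K = (j0,k0):
   the dyadic subintervals of K of rank j are (j,k) with
   k0 2^(j-j0) <= k < (k0+1) 2^(j-j0). *)
Definition carleson_partial (N j0 k0 M : nat) (e : nat -> C) : R :=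
  rsum j0 M (fun j =>
    rsum (k0 * 2 ^ (j - j0)) (2 ^ (j - j0)) (fun k =>
      (Cmod (inner N (omega N j k) e))^2 * dlen j)).

From Stdlib Require Import Reals Lra Lia Arith.
From Coquelicot Require Import Coquelicot.
Open Scope R_scope.

(* Group the intervals of D(K) by rank rk K + n and split <omega_I, e> into the
   coordinates l < rk K and rk K <= l < rk K + n.  The low part is bounded by
   Cauchy-Schwarz, and its weights sum_{l < rk K} a_{rk I - l}^2 sum to O(1) over n,
   since the tails of sum 1/m^2 are O(1/n) and the harmonic sum up to N is O(log N).
   For the high part, the phases e^{2 pi i 2^l C_I}, l < n, are orthogonal over the
   2^n intervals of rank rk K + n in K (a dyadic Parseval identity), so these
   intervals contribute |K| sum_l a_{n-l}^2 |e_{rk K + l}|^2, and the convolution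
   with a_m^2 ~ 1/(m^2 log N) sums to at most 4 ||e||^2.  Here C = 24. *)

Lemma rsum_ext a n f g : (forall i, (a <= i < a + n)%nat -> f i = g i) ->
  rsum a n f = rsum a n g.
Proof.
  induction n as [|n IH]; intros H; simpl; [reflexivity|].
  rewrite IH, (H (a + n)%nat); [reflexivity | lia | intros; apply H; lia].
Qed.

Lemma rsum_le a n f g : (forall i, (a <= i < a + n)%nat -> f i <= g i) ->
  rsum a n f <= rsum a n g.
Proof.
  induction n as [|n IH]; intros H; simpl; [lra|].
  apply Rplus_le_compat; [apply IH; intros; apply H | apply H]; lia.
Qed.

Lemma rsum_const a n c : rsum a n (fun _ => c) = INR n * c.
Proof. induction n as [|n IH]; simpl rsum; [simpl; ring|]. rewrite IH, S_INR; ring. Qed.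

Lemma rsum_nonneg a n f : (forall i, (a <= i < a + n)%nat -> 0 <= f i) ->
  0 <= rsum a n f.
Proof.
  intros H. rewrite <- (Rmult_0_r (INR n)), <- rsum_const with (a := a).
  apply rsum_le; exact H.
Qed.

Lemma rsum_eq0 a n f : (forall i, (a <= i < a + n)%nat -> f i = 0) -> rsum a n f = 0.
Proof.
  intros H. rewrite (rsum_ext a n f (fun _ => 0)), rsum_const; [ring | exact H].
Qed.

Lemma rsum_plus a n f g : rsum a n (fun i => f i + g i) = rsum a n f + rsum a n g.
Proof. induction n as [|n IH]; simpl; [ring|]. rewrite IH; ring. Qed.

Lemma rsum_scal a n c f : rsum a n (fun i => c * f i) = c * rsum a n f.
Proof. induction n as [|n IH]; simpl; [ring|]. rewrite IH; ring. Qed.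

Lemma rsum_shift a n f : rsum a n f = rsum 0 n (fun i => f (a + i)%nat).
Proof. induction n as [|n IH]; simpl; [reflexivity|]. rewrite IH; reflexivity. Qed.

Lemma rsum_split a n p f : rsum a (n + p) f = rsum a n f + rsum (a + n) p f.
Proof.
  induction p as [|p IH]; simpl.
  - rewrite Nat.add_0_r; ring.
  - rewrite Nat.add_succ_r; simpl. rewrite IH, Nat.add_assoc; ring.
Qed.

Lemma rsum_first a n f : rsum a (S n) f = f a + rsum (S a) n f.
Proof.
  rewrite <- Nat.add_1_l, rsum_split, Nat.add_1_r. simpl. rewrite Nat.add_0_r; ring.
Qed.

Lemma rsum_le_longer a n n' f : (forall i, 0 <= f i) ->
  (forall i, (a + n' <= i)%nat -> f i = 0) -> rsum a n f <= rsum a n' f.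
Proof.
  intros Hf Hvanish. destruct (le_lt_dec n n') as [Hle|Hlt].
  - replace n' with (n + (n' - n))%nat by lia. rewrite rsum_split.
    assert (0 <= rsum (a + n) (n' - n) f) by (apply rsum_nonneg; auto). lra.
  - replace n with (n' + (n - n'))%nat by lia. rewrite rsum_split.
    rewrite (rsum_eq0 (a + n')); [lra|]. intros; apply Hvanish; lia.
Qed.

Lemma rsum_Cauchy_Schwarz n f g :
  (rsum 0 n (fun l => f l * g l))^2 <= rsum 0 n (fun l => f l ^ 2) * rsum 0 n (fun l => g l ^ 2).
Proof.
  induction n as [|n IH]; cbn [rsum]; [lra|].
  set (S := rsum 0 n (fun l => f l * g l)) in *.
  set (A := rsum 0 n (fun l => f l ^ 2)) in *.
  set (B := rsum 0 n (fun l => g l ^ 2)) in *.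
  assert (HA : 0 <= A) by (apply rsum_nonneg; intros; apply pow2_ge_0).
  assert (HB : 0 <= B) by (apply rsum_nonneg; intros; apply pow2_ge_0).
  set (x := f (0 + n)%nat); set (y := g (0 + n)%nat).
  assert (Hcross : 2 * S * x * y <= A * y ^ 2 + B * x ^ 2).
  { destruct (Req_dec A 0) as [HA0|HA0].
    - assert (HS : S ^ 2 <= 0) by (rewrite HA0 in IH; lra).
      assert (S = 0) by nra. rewrite H, HA0. nra.
    - assert (E : A * (A * y ^ 2 + B * x ^ 2 - 2 * S * x * y)
                  = (A * y - S * x) ^ 2 + (A * B - S ^ 2) * x ^ 2) by ring.
      assert (0 <= (A * y - S * x) ^ 2) by apply pow2_ge_0.
      assert (0 <= (A * B - S ^ 2) * x ^ 2) by (apply Rmult_le_pos; [lra | apply pow2_ge_0]).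
      apply (Rmult_le_reg_l A); [lra | nra]. }
  nra.
Qed.

Lemma csum_ext n f g : (forall i, (i < n)%nat -> f i = g i) -> csum n f = csum n g.
Proof.
  induction n as [|n IH]; intros H; simpl; [reflexivity|].
  rewrite IH, (H n); [reflexivity | lia | intros; apply H; lia].
Qed.

Lemma csum_first n f : csum (S n) f = Cplus (f 0%nat) (csum n (fun l => f (S l))).
Proof.
  induction n as [|n IH].
  - simpl. rewrite Cplus_0_l, Cplus_0_r. reflexivity.
  - change (csum (S (S n)) f) with (Cplus (csum (S n) f) (f (S n))).
    rewrite IH. simpl. rewrite Cplus_assoc. reflexivity.
Qed.

Lemma csum_split a m f :
  csum (a + m) f = Cplus (csum a f) (csum m (fun l => f (a + l)%nat)).
Proof.
  induction m as [|m IH]; simpl.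
  - rewrite Nat.add_0_r, Cplus_0_r. reflexivity.
  - rewrite Nat.add_succ_r. simpl. rewrite IH, Cplus_assoc. reflexivity.
Qed.

Lemma csum_eq0 n f : (forall i, (i < n)%nat -> f i = RtoC 0) -> csum n f = RtoC 0.
Proof.
  induction n as [|n IH]; intros H; simpl; [reflexivity|].
  rewrite IH, (H n), Cplus_0_l; [reflexivity | lia | intros; apply H; lia].
Qed.

Lemma Cmod_csum_le n f : Cmod (csum n f) <= rsum 0 n (fun l => Cmod (f l)).
Proof.
  induction n as [|n IH]; simpl; [rewrite Cmod_0; lra|].
  eapply Rle_trans; [apply Cmod_triangle | lra].
Qed.

Lemma Cmod_sq z : Cmod z ^ 2 = fst z ^ 2 + snd z ^ 2.
Proof. apply Cmod2_alt. Qed.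

Lemma Cmod_plus_sq_le x y : Cmod (Cplus x y) ^ 2 <= 2 * Cmod x ^ 2 + 2 * Cmod y ^ 2.
Proof.
  rewrite !Cmod_sq. destruct x as [x1 x2], y as [y1 y2]; simpl.
  assert (0 <= (x1 - y1) ^ 2) by apply pow2_ge_0.
  assert (0 <= (x2 - y2) ^ 2) by apply pow2_ge_0. nra.
Qed.

Lemma parallelogram x y :
  Cmod (Cplus x y) ^ 2 + Cmod (Cplus (Copp x) y) ^ 2 = 2 * Cmod x ^ 2 + 2 * Cmod y ^ 2.
Proof. rewrite !Cmod_sq. destruct x, y; simpl. ring. Qed.

Lemma norm2_nonneg n u : 0 <= norm2 n u.
Proof. apply rsum_nonneg. intros; apply pow2_ge_0. Qed.

Lemma inner_split a m u v :
  inner (a + m) u v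
  = Cplus (inner a u v) (inner m (fun l => u (a + l)%nat) (fun l => v (a + l)%nat)).
Proof. apply csum_split. Qed.

Lemma norm2_split a m u :
  norm2 (a + m) u = norm2 a u + norm2 m (fun l => u (a + l)%nat).
Proof. unfold norm2. rewrite rsum_split, (rsum_shift (0 + a)). reflexivity. Qed.

Lemma norm2_mono a n u : (a <= n)%nat -> norm2 a u <= norm2 n u.
Proof.
  intros H. replace n with (a + (n - a))%nat by lia. rewrite norm2_split.
  pose proof (norm2_nonneg (n - a) (fun l => u (a + l)%nat)). lra.
Qed.

Lemma norm2_tail_le a n u : norm2 (n - a) (fun l => u (a + l)%nat) <= norm2 n u.
Proof.
  destruct (le_lt_dec a n) as [H|H].
  - replace n with (a + (n - a))%nat at 2 by lia. rewrite norm2_split.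
    pose proof (norm2_nonneg a u). lra.
  - replace (n - a)%nat with 0%nat by lia. apply norm2_nonneg.
Qed.

Lemma inner_Cauchy_Schwarz n u v : Cmod (inner n u v) ^ 2 <= norm2 n u * norm2 n v.
Proof.
  assert (Hle : Cmod (inner n u v) <= rsum 0 n (fun l => Cmod (u l) * Cmod (v l))).
  { eapply Rle_trans; [apply Cmod_csum_le|].
    apply Req_le, rsum_ext. intros. rewrite Cmod_mult, Cmod_conj. reflexivity. }
  eapply Rle_trans; [apply pow_incr; split; [apply Cmod_ge_0 | exact Hle]|].
  apply rsum_Cauchy_Schwarz.
Qed.

Lemma Cmod_expi x : Cmod (expi x) = 1.
Proof.
  assert (H : Cmod (expi x) ^ 2 = 1).
  { rewrite Cmod_sq. unfold expi; simpl.
    pose proof (sin2_cos2 (2 * PI * x)) as Hsc. unfold Rsqr in Hsc. lra. }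
  pose proof (Cmod_ge_0 (expi x)). nra.
Qed.

Lemma expi_add_half x : expi (x + / 2) = Copp (expi x).
Proof.
  unfold expi, Copp. replace (2 * PI * (x + / 2)) with (2 * PI * x + PI) by field.
  rewrite neg_cos, neg_sin. reflexivity.
Qed.

Lemma expi_add_nat x n : expi (x + INR n) = expi x.
Proof.
  unfold expi. replace (2 * PI * (x + INR n)) with (2 * PI * x + 2 * INR n * PI) by ring.
  rewrite cos_period, sin_period. reflexivity.
Qed.

Lemma INR_pow2 n : INR (2 ^ n) = 2 ^ n.
Proof. rewrite pow_INR. reflexivity. Qed.

Lemma pow2_mul_dcenter a l m q r :
  2 ^ (a + l) * dcenter (a + m) (q * 2 ^ m + r) = 2 ^ l * dcenter m r + INR (q * 2 ^ l).
Proof.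
  unfold dcenter. rewrite !pow_add, !plus_INR, !mult_INR, !INR_pow2.
  field. split; apply pow_nonzero; lra.
Qed.

Lemma dcenter_add_half m r : dcenter (S m) (2 ^ m + r) = dcenter (S m) r + / 2.
Proof.
  unfold dcenter. rewrite plus_INR, INR_pow2. simpl pow.
  field. apply pow_nonzero; lra.
Qed.

Lemma dyadic_Parseval m : forall b : nat -> C,
  rsum 0 (2 ^ m) (fun r => Cmod (csum m (fun l => Cmult (b l) (expi (2 ^ l * dcenter m r)))) ^ 2)
  = 2 ^ m * rsum 0 m (fun l => Cmod (b l) ^ 2).
Proof.
  induction m as [|m IH]; intros b.
  { simpl. rewrite Cmod_0. ring. }
  set (X := fun r => Cmult (b 0%nat) (expi (2 ^ 0 * dcenter (S m) r))).
  set (G := fun r => csum m (fun l => Cmult (b (S l)) (expi (2 ^ l * dcenter m r)))).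
  assert (Hsucc : forall l r, 2 ^ S l * dcenter (S m) r = 2 ^ l * dcenter m r).
  { intros l r. change (2 ^ S l * dcenter (S m) r)
      with (2 ^ (1 + l) * dcenter (1 + m) (0 * 2 ^ m + r)).
    rewrite pow2_mul_dcenter, Nat.mul_0_l, Rplus_0_r. reflexivity. }
  (* On the second half of the indices the constant term flips sign, the others are unchanged. *)
  assert (Hlow : forall r, csum (S m) (fun l => Cmult (b l) (expi (2 ^ l * dcenter (S m) r)))
                           = Cplus (X r) (G r)).
  { intros r. rewrite csum_first. f_equal. apply csum_ext. intros l _. rewrite Hsucc. reflexivity. }
  assert (Hhigh : forall r,
      csum (S m) (fun l => Cmult (b l) (expi (2 ^ l * dcenter (S m) (2 ^ m + r))))
      = Cplus (Copp (X r)) (G r)).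
  { intros r. rewrite csum_first. f_equal.
    - unfold X. rewrite dcenter_add_half, Rmult_plus_distr_l.
      replace (2 ^ 0 * / 2) with (/ 2) by (simpl; ring).
      rewrite expi_add_half. apply injective_projections; simpl; ring.
    - apply csum_ext. intros l _.
      pose proof (pow2_mul_dcenter 1 l m 1 r) as Hshift.
      rewrite Nat.mul_1_l in Hshift. cbn [Nat.add] in Hshift.
      rewrite Hshift, expi_add_nat. reflexivity. }
  replace (2 ^ S m)%nat with (2 ^ m + 2 ^ m)%nat by (simpl; lia).
  rewrite rsum_split, Nat.add_0_l, (rsum_shift (2 ^ m)), <- rsum_plus.
  rewrite (rsum_ext _ _ _ (fun r => 2 * Cmod (X r) ^ 2 + 2 * Cmod (G r) ^ 2)).
  2: { intros r _. rewrite Hlow, Hhigh. apply parallelogram. }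
  rewrite rsum_plus, !rsum_scal. unfold G. rewrite IH.
  rewrite (rsum_ext _ _ _ (fun _ => Cmod (b 0%nat) ^ 2)).
  2: { intros r _. unfold X. rewrite Cmod_mult, Cmod_expi. ring. }
  rewrite rsum_const, INR_pow2, rsum_first, (rsum_shift 1). simpl. ring.
Qed.

Lemma omega_coord N j k l : (1 <= j <= N)%nat -> (l < j)%nat ->
  omega N j k l = Cmult (RtoC (a_coef N (j - l))) (expi (2 ^ l * dcenter j k)).
Proof.
  intros Hj Hl. unfold omega.
  replace (1 <=? j)%nat with true by (symmetry; apply Nat.leb_le; lia).
  replace (j <=? N)%nat with true by (symmetry; apply Nat.leb_le; lia).
  replace (l <? j)%nat with true by (symmetry; apply Nat.ltb_lt; lia).
  reflexivity.
Qed.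

Lemma omega_eq0 N j k l : (j <= l \/ N < j)%nat -> omega N j k l = RtoC 0.
Proof.
  intros H. unfold omega.
  destruct (1 <=? j)%nat, (j <=? N)%nat eqn:HjN, (l <? j)%nat eqn:Hlj; try reflexivity.
  apply Nat.leb_le in HjN. apply Nat.ltb_lt in Hlj. lia.
Qed.

Lemma inner_omega_eq0 N j k e : (N < j)%nat -> inner N (omega N j k) e = RtoC 0.
Proof.
  intros H. apply csum_eq0. intros l _. rewrite omega_eq0 by lia. apply Cmult_0_l.
Qed.

Lemma inner_omega_trunc N j k e : (j <= N)%nat ->
  inner N (omega N j k) e = inner j (omega N j k) e.
Proof.
  intros H. replace N with (j + (N - j))%nat at 1 by lia.
  rewrite inner_split. unfold inner at 2. rewrite csum_eq0, Cplus_0_r; [reflexivity|].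
  intros l _. rewrite omega_eq0 by lia. apply Cmult_0_l.
Qed.

Definition low_weight (N j0 n : nat) : R :=
  rsum 0 j0 (fun l => a_coef N (j0 + n - l) ^ 2).

Definition high_energy (N : nat) (e : nat -> C) (j0 n : nat) : R :=
  rsum 0 n (fun l => a_coef N (n - l) ^ 2 * Cmod (e (j0 + l)%nat) ^ 2).

Definition layer (N : nat) (e : nat -> C) (j0 k0 n : nat) : R :=
  rsum (k0 * 2 ^ n) (2 ^ n)
    (fun k => Cmod (inner N (omega N (j0 + n) k) e) ^ 2 * dlen (j0 + n)).

Lemma carleson_partial_layers N j0 k0 M e :
  carleson_partial N j0 k0 M e = rsum 0 M (layer N e j0 k0).
Proof.
  unfold carleson_partial. rewrite rsum_shift. apply rsum_ext. intros n _.
  unfold layer. replace (j0 + n - j0)%nat with n by lia. reflexivity.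
Qed.

Lemma dlen_pos j : 0 < dlen j.
Proof. apply Rinv_0_lt_compat, pow_lt; lra. Qed.

Lemma dlen_add_mul_pow2 j n : dlen (j + n) * 2 ^ n = dlen j.
Proof. unfold dlen. rewrite pow_add. field. split; apply pow_nonzero; lra. Qed.

Lemma inner_omega_low_le N j0 n k e : (j0 + n <= N)%nat ->
  Cmod (inner j0 (omega N (j0 + n) k) e) ^ 2 <= low_weight N j0 n * norm2 N e.
Proof.
  intros H. eapply Rle_trans; [apply inner_Cauchy_Schwarz|].
  replace (norm2 j0 (omega N (j0 + n) k)) with (low_weight N j0 n).
  - apply Rmult_le_compat_l; [apply rsum_nonneg; intros; apply pow2_ge_0|].
    apply norm2_mono; lia.
  - apply rsum_ext. intros l Hl. rewrite omega_coord by lia.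
    rewrite Cmod_mult, Cmod_expi, Cmod_R, Rmult_1_r, pow2_abs. reflexivity.
Qed.

Lemma omega_high_coord N j0 n k0 r l : (j0 + n <= N)%nat -> (l < n)%nat ->
  omega N (j0 + n) (k0 * 2 ^ n + r) (j0 + l)
  = Cmult (RtoC (a_coef N (n - l))) (expi (2 ^ l * dcenter n r)).
Proof.
  intros H Hl. rewrite omega_coord by lia.
  rewrite pow2_mul_dcenter, expi_add_nat.
  replace (j0 + n - (j0 + l))%nat with (n - l)%nat by lia. reflexivity.
Qed.

Lemma sum_inner_omega_high N j0 n k0 e : (j0 + n <= N)%nat ->
  rsum 0 (2 ^ n) (fun r => Cmod (inner n (fun l => omega N (j0 + n) (k0 * 2 ^ n + r) (j0 + l)%nat)
                                         (fun l => e (j0 + l)%nat)) ^ 2)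
  = 2 ^ n * high_energy N e j0 n.
Proof.
  intros H. set (b := fun l => Cmult (RtoC (a_coef N (n - l))) (Cconj (e (j0 + l)%nat))).
  rewrite (rsum_ext _ _ _ (fun r =>
    Cmod (csum n (fun l => Cmult (b l) (expi (2 ^ l * dcenter n r)))) ^ 2)).
  - rewrite dyadic_Parseval. f_equal. apply rsum_ext. intros l _. unfold b.
    rewrite Cmod_mult, Cmod_R, Cmod_conj, Rpow_mult_distr, pow2_abs. reflexivity.
  - intros r _. f_equal. f_equal. apply csum_ext. intros l Hl.
    rewrite omega_high_coord by lia. unfold b.
    rewrite <- !Cmult_assoc. f_equal. apply Cmult_comm.
Qed.

Lemma layer_eq0 N e j0 k0 n : (N < j0 + n)%nat -> layer N e j0 k0 n = 0.
Proof.
  intros H. apply rsum_eq0. intros k _.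
  rewrite inner_omega_eq0, Cmod_0 by lia. simpl. ring.
Qed.

Lemma layer_nonneg N e j0 k0 n : 0 <= layer N e j0 k0 n.
Proof.
  apply rsum_nonneg. intros. apply Rmult_le_pos; [apply pow2_ge_0 | apply Rlt_le, dlen_pos].
Qed.

Lemma layer_le N e j0 k0 n :
  layer N e j0 k0 n
  <= dlen j0 * (2 * low_weight N j0 n * norm2 N e + 2 * high_energy N e j0 n).
Proof.
  assert (Hlow : 0 <= low_weight N j0 n) by (apply rsum_nonneg; intros; apply pow2_ge_0).
  assert (Hhigh : 0 <= high_energy N e j0 n)
    by (apply rsum_nonneg; intros; apply Rmult_le_pos; apply pow2_ge_0).
  pose proof (norm2_nonneg N e) as Hnorm. pose proof (dlen_pos j0) as Hdlen.
  destruct (le_lt_dec (j0 + n) N) as [H|H].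
  2: { rewrite layer_eq0 by lia. apply Rmult_le_pos; [lra | nra]. }
  unfold layer. rewrite rsum_shift.
  eapply Rle_trans.
  { apply rsum_le. intros r _. apply Rmult_le_compat_r; [apply Rlt_le, dlen_pos|].
    rewrite inner_omega_trunc, inner_split by lia.
    eapply Rle_trans; [apply Cmod_plus_sq_le|].
    apply Rplus_le_compat_r, Rmult_le_compat_l; [lra|].
    apply (inner_omega_low_le N j0 n (k0 * 2 ^ n + r) e H). }
  rewrite (rsum_ext _ _ _ (fun r => 2 * low_weight N j0 n * norm2 N e * dlen (j0 + n)
    + 2 * dlen (j0 + n) * Cmod (inner n (fun l => omega N (j0 + n) (k0 * 2 ^ n + r) (j0 + l)%nat)
                                       (fun l => e (j0 + l)%nat)) ^ 2))
    by (intros; ring).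
  rewrite rsum_plus, rsum_const, rsum_scal, sum_inner_omega_high, INR_pow2 by exact H.
  rewrite <- (dlen_add_mul_pow2 j0 n). apply Req_le. ring.
Qed.

Lemma inv_sq_le_telescope q : 1 <= q -> / q ^ 2 <= 2 / q - 2 / (q + 1).
Proof.
  intros Hq.
  assert (E : 2 / q - 2 / (q + 1) - / q ^ 2 = (q - 1) / (q ^ 2 * (q + 1))) by (field; lra).
  assert (0 <= (q - 1) / (q ^ 2 * (q + 1))).
  { apply Rdiv_le_0_compat; [lra|]. apply Rmult_lt_0_compat; [apply pow_lt|]; lra. }
  lra.
Qed.

Lemma sum_inv_sq_tail_le p : forall n,
  rsum 0 p (fun l => / INR (p + n - l) ^ 2) <= 2 / (INR n + 1).
Proof.
  induction p as [|p IH]; intros n.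
  { simpl. pose proof (pos_INR n). apply Rlt_le, Rdiv_lt_0_compat; lra. }
  cbn [rsum]. replace (S p + n - (0 + p))%nat with (S n) by lia.
  rewrite (rsum_ext _ _ _ (fun l => / INR (p + S n - l) ^ 2))
    by (intros; do 3 f_equal; lia).
  pose proof (IH (S n)) as Hrest. rewrite S_INR in *.
  pose proof (inv_sq_le_telescope (INR n + 1)). pose proof (pos_INR n).
  lra.
Qed.

Lemma inv_succ_le_ln_diff x : 0 < x -> / (x + 1) <= ln (x + 1) - ln x.
Proof.
  intros Hx.
  assert (H1 : x / (x + 1) <= exp (- / (x + 1))).
  { eapply Rle_trans; [|apply exp_ineq1_le]. apply Req_le. field. lra. }
  assert (H2 : ln (x / (x + 1)) <= - / (x + 1)).
  { rewrite <- (ln_exp (- / (x + 1))). apply ln_le; [apply Rdiv_lt_0_compat; lra | exact H1]. }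
  unfold Rdiv in H2. rewrite ln_mult, ln_Rinv in H2; try lra.
  apply Rinv_0_lt_compat; lra.
Qed.

Lemma harmonic_le_ln P : (1 <= P)%nat -> rsum 0 P (fun n => / (INR n + 1)) <= 1 + ln (INR P).
Proof.
  induction P as [|P IH]; intros HP; [lia|]. destruct P as [|P].
  { simpl. rewrite ln_1. lra. }
  cbn [rsum]. cbn [rsum] in IH. specialize (IH ltac:(lia)).
  assert (1 <= INR (S P)) by (apply (le_INR 1); lia).
  pose proof (inv_succ_le_ln_diff (INR (S P)) ltac:(lra)).
  rewrite (S_INR (S P)). simpl (0 + S P)%nat. lra.
Qed.

Lemma sum_conv_inv_sq_le (w : nat -> R) : (forall l, 0 <= w l) -> forall P,
  rsum 0 P (fun n => rsum 0 n (fun l => / INR (n - l) ^ 2 * w l))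
  <= rsum 0 P (fun l => (2 - 2 / INR (P - l)) * w l).
Proof.
  intros Hw P. induction P as [|P IH]; [simpl; lra|].
  cbn [rsum]. rewrite Nat.add_0_l.
  replace (S P - P)%nat with 1%nat by lia. replace (2 - 2 / INR 1) with 0 by (simpl; field).
  eapply Rle_trans; [apply Rplus_le_compat_r, IH|].
  rewrite <- rsum_plus, Rmult_0_l, Rplus_0_r. apply rsum_le. intros l Hl.
  replace (S P - l)%nat with (S (P - l)) by lia. rewrite S_INR.
  assert (1 <= INR (P - l)) by (apply (le_INR 1); lia).
  pose proof (inv_sq_le_telescope (INR (P - l)) H). pose proof (Hw l). nra.
Qed.

Lemma ln_INR_bounds N : (2 <= N)%nat ->
  / 2 <= ln (INR N) /\ ln (INR N + 1) <= 2 * ln (INR N).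
Proof.
  intros HN. assert (2 <= INR N) by (apply (le_INR 2); lia).
  assert (ln 2 <= ln (INR N)) by (apply ln_le; lra).
  pose proof ln_lt_2. split; [lra|].
  replace (2 * ln (INR N)) with (ln (INR N * INR N)) by (rewrite ln_mult; lra).
  apply ln_le; nra.
Qed.

Lemma inv_ln_INR_bounds N : (2 <= N)%nat -> 0 < / ln (INR N) <= 2.
Proof.
  intros HN. destruct (ln_INR_bounds N HN) as [HL _].
  split; [apply Rinv_0_lt_compat; lra|].
  rewrite <- (Rinv_inv 2). apply Rinv_le_contravar; lra.
Qed.

Lemma a_coef_sq N m : (1 <= m)%nat -> (2 <= N)%nat ->
  a_coef N m ^ 2 = / INR m ^ 2 * / ln (INR N).
Proof.
  intros Hm HN. unfold a_coef.
  assert (HL : 0 < ln (INR N)) by (pose proof (ln_INR_bounds N HN); lra).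
  pose proof (lt_0_INR m ltac:(lia)).
  pose proof (pow2_sqrt (ln (INR N)) (Rlt_le _ _ HL)) as Hsq.
  pose proof (sqrt_lt_R0 _ HL).
  rewrite <- Hsq at 2. field. split; lra.
Qed.

Lemma sum_low_weight_le N j0 P : (2 <= N)%nat -> (P <= S N)%nat ->
  rsum 0 P (low_weight N j0) <= 8.
Proof.
  intros HN HP. destruct (ln_INR_bounds N HN) as [HLhalf HLsucc].
  pose proof (inv_ln_INR_bounds N HN) as HiL. set (L := ln (INR N)) in *.
  assert (Hterm : forall n, low_weight N j0 n <= / L * (2 / (INR n + 1))).
  { intros n. eapply Rle_trans; [|apply Rmult_le_compat_l, sum_inv_sq_tail_le;
      apply Rlt_le, Rinv_0_lt_compat; lra].
    rewrite <- rsum_scal. apply Req_le, rsum_ext. intros l Hl.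
    rewrite a_coef_sq by lia. fold L. ring. }
  destruct P as [|P]; [simpl; lra|].
  eapply Rle_trans; [apply rsum_le; intros n _; apply Hterm|].
  rewrite rsum_scal, (rsum_ext _ _ _ (fun n => 2 * / (INR n + 1))) by (intros; unfold Rdiv; ring).
  rewrite rsum_scal.
  pose proof (harmonic_le_ln (S P) ltac:(lia)) as Hharm.
  assert (ln (INR (S P)) <= ln (INR N + 1)).
  { apply ln_le; [apply lt_0_INR; lia|]. rewrite S_INR. apply Rplus_le_compat_r, le_INR. lia. }
  apply Rle_trans with (/ L * (2 * (1 + 2 * L))); [apply Rmult_le_compat_l; lra|].
  replace (/ L * (2 * (1 + 2 * L))) with (2 * / L + 4) by (field; lra). lra.
Qed.

Lemma sum_high_energy_le N e j0 : (2 <= N)%nat ->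
  rsum 0 (S (N - j0)) (high_energy N e j0) <= 4 * norm2 N e.
Proof.
  intros HN. pose proof (inv_ln_INR_bounds N HN) as HiL.
  set (L := ln (INR N)) in *. set (Q := (N - j0)%nat).
  set (w := fun l => Cmod (e (j0 + l)%nat) ^ 2).
  assert (Hw : forall l, 0 <= w l) by (intros; apply pow2_ge_0).
  rewrite (rsum_ext _ _ _ (fun n => / L * rsum 0 n (fun l => / INR (n - l) ^ 2 * w l))).
  2: { intros n _. unfold high_energy. rewrite <- rsum_scal. apply rsum_ext. intros l Hl.
       rewrite a_coef_sq by lia. fold L. unfold w. ring. }
  rewrite rsum_scal.
  assert (Hconv : rsum 0 (S Q) (fun n => rsum 0 n (fun l => / INR (n - l) ^ 2 * w l))
                  <= 2 * norm2 Q (fun l => e (j0 + l)%nat)).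
  { eapply Rle_trans; [apply sum_conv_inv_sq_le, Hw|].
    cbn [rsum]. rewrite Nat.add_0_l. replace (S Q - Q)%nat with 1%nat by lia.
    replace (2 - 2 / INR 1) with 0 by (simpl; field). rewrite Rmult_0_l, Rplus_0_r.
    unfold norm2. rewrite <- rsum_scal. apply rsum_le. intros l Hl.
    assert (0 < 2 / INR (S Q - l)) by (apply Rdiv_lt_0_compat; [lra | apply lt_0_INR; lia]).
    pose proof (Hw l). fold (w l). nra. }
  assert (Htail : norm2 Q (fun l => e (j0 + l)%nat) <= norm2 N e) by apply norm2_tail_le.
  pose proof (norm2_nonneg Q (fun l => e (j0 + l)%nat)).
  eapply Rle_trans; [apply Rmult_le_compat_l; [lra | exact Hconv]|].
  apply Rle_trans with (2 * (2 * norm2 Q (fun l => e (j0 + l)%nat)));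
    [apply Rmult_le_compat_r | ]; lra.
Qed.

Theorem lemma7 :
  exists Cst : R, 0 < Cst /\
    forall (N : nat), (2 <= N)%nat ->
    forall (j0 k0 : nat), (k0 < 2 ^ j0)%nat ->
    forall (e : nat -> C) (M : nat),
      carleson_partial N j0 k0 M e <= Cst * dlen j0 * norm2 N e.
Proof.
  exists 24. split; [lra|]. intros N HN j0 k0 _ e M.
  rewrite carleson_partial_layers.
  apply Rle_trans with (rsum 0 (S (N - j0)) (layer N e j0 k0)).
  { apply rsum_le_longer; [apply layer_nonneg|]. intros n Hn. apply layer_eq0. lia. }
  eapply Rle_trans; [apply rsum_le; intros n _; apply layer_le|].
  rewrite rsum_scal, rsum_plus, (rsum_ext _ _ _ (fun n => 2 * norm2 N e * low_weight N j0 n))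
    by (intros; ring).
  rewrite !rsum_scal.
  pose proof (sum_low_weight_le N j0 (S (N - j0)) HN ltac:(lia)).
  pose proof (sum_high_energy_le N e j0 HN).
  pose proof (norm2_nonneg N e). pose proof (dlen_pos j0).
  replace (24 * dlen j0 * norm2 N e) with (dlen j0 * (2 * norm2 N e * 8 + 2 * (4 * norm2 N e)))
    by ring.
  apply Rmult_le_compat_l; nra.
Qed.
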